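(* Let $\beta<0$, $G_\beta(u)=-u^\beta$, $L\in\mathbb{N}$, $d>0$ and $u_0\in\mathcal{P}_{L,d}$. For $\delta>0$ let $u_{0,\delta}=u_0\vee\delta$ and let $u_\delta$ be a solution of $\partial_tu=\Delta G_\beta(u)$, $u(0)=u_{0,\delta}$, satisfying $\delta\le u_\delta\le\|u_{0,\delta}\|_\infty$. Then there exist $c=c(\beta,L,d)>0$ and $t^*=t^*(\beta,L,d)>0$ such that $u_\delta(t,k)\ge c\,t^{\frac1{1-\beta}}$ for all $0\le t\le t^*$ and $k\in\mathbb{Z}$.
   Context: $\Delta v(k)=v(k-1)-2v(k)+v(k+1)$. For $u\in\ell^\infty_+(\mathbb{Z})$, $\sigma_+(u,k,d)=\inf\{l>k:u(l)\ge d\}$ and $\mathcal{P}_{L,d}=\{u\in\ell^\infty_+(\mathbb{Z}):\sup_k(\sigma_+(u,k,d)-k)\le L\}$. A solution: $u\in C^0([0,\infty);\ell^\infty_+(\mathbb{Z}))$ with the given initial datum, each $u(\cdot,k)\in C^1((0,\infty);(0,\infty))$ satisfying the equation pointwise. (Such $u_\delta$ exist.) *)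

From Stdlib Require Import Reals ZArith.
From Coquelicot Require Import Coquelicot.
Open Scope R_scope.

Definition linf_plus (v : Z -> R) : Prop :=
  (forall k, 0 <= v k) /\ exists M, forall k, Rabs (v k) <= M.

Definition linf_norm (v : Z -> R) : R :=
  real (Lub_Rbar (fun x => exists k, x = Rabs (v k))).

Definition dlap (v : Z -> R) (k : Z) : R :=
  v (k - 1)%Z - 2 * v k + v (k + 1)%Z.

(* G_beta(u) = - u^beta  (used for u > 0) *)
Definition Gb (beta x : R) : R := - Rpower x beta.

(* sigma_+(u,k,d) = inf { l > k : u(l) >= d }  (in Rbar; +oo if empty) *)
Definition sigma_plus (u : Z -> R) (k : Z) (d : R) : Rbar :=
  Glb_Rbar (fun x => exists l : Z, (k < l)%Z /\ d <= u l /\ x = IZR l).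

Definition in_P (L : nat) (d : R) (u : Z -> R) : Prop :=
  linf_plus u /\
  forall k : Z, Rbar_le (Rbar_minus (sigma_plus u k d) (IZR k)) (INR L).

Definition is_solution (beta : R) (u0 : Z -> R) (u : R -> Z -> R) : Prop :=
  (forall t, 0 <= t -> linf_plus (u t)) /\
  (forall t, 0 <= t -> forall eps, 0 < eps -> exists eta, 0 < eta /\
     forall s, 0 <= s -> Rabs (s - t) < eta ->
       linf_norm (fun k => u s k - u t k) <= eps) /\
  (forall k, u 0 k = u0 k) /\
  (forall k t, 0 < t -> 0 < u t k) /\
  (forall k t, 0 < t -> ex_derive (fun s => u s k) t) /\
  (forall k t, 0 < t -> continuous (fun s => Derive (fun s' => u s' k) s) t) /\
  (forall k t, 0 < t ->
     is_derive (fun s => u s k) t (dlap (fun j => Gb beta (u t j)) k)).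

(* t^a for t >= 0, a > 0, with 0^a = 0 *)
Definition rpow0 (t a : R) : R := if Rle_dec t 0 then 0 else Rpower t a.

From Stdlib Require Import Reals Lra Lia ZArith Classical ConstructiveEpsilon.
From Coquelicot Require Import Coquelicot.
Open Scope R_scope.

(* The solution is compared from below with an explicit subsolution v on [0, t*].
   With a = 1/(1-beta) and s = t + tau, put v = d/2 - C s^a on the sites where
   u0 >= d, and v = w^(1/beta) s^a elsewhere, where w(k) = (k - l)(r - k) for the
   nearest sites l < k < r with u0 >= d.  Then G(v) = - w s^(a-1) on those sites,
   and since w has second difference -2, Delta G(v) dominates the growth
   a w^(1/beta) s^(a-1) of v; at the sites with u0 >= d, C is chosen to beat the
   pull of the neighbours.  Membership in P_{L,d} bounds the gaps r - l by L,
   so w <= L^2 and every v(t, k) is at least c t^a with c, t* depending only on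
   beta, L, d.  The comparison principle on Z avoids maxima over infinitely many
   sites: a linear Gronwall estimate on a short time window halves any uniform
   bound on v - u, hence v <= u there, and the windows are chained in time. *)

Lemma Rpower_pos x y : 0 < Rpower x y.
Proof. apply exp_pos. Qed.

Lemma Rpower_1_l y : Rpower 1 y = 1.
Proof. unfold Rpower. rewrite ln_1, Rmult_0_r. apply exp_0. Qed.

Lemma Rle_Rpower_l_nonpos a b c : c <= 0 -> 0 < a <= b -> Rpower b c <= Rpower a c.
Proof.
  intros hc hab. rewrite <- (Ropp_involutive c), (Rpower_Ropp b), (Rpower_Ropp a).
  apply Rinv_le_contravar; [apply Rpower_pos | apply Rle_Rpower_l; lra].
Qed.

Lemma Rpower_Rinv_r x c : 0 < x -> c <> 0 -> Rpower (Rpower x (/ c)) c = x.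
Proof.
  intros hx hc. rewrite Rpower_mult, Rinv_l by exact hc. now apply Rpower_1.
Qed.

Lemma Rpower_pred x c : 0 < x -> Rpower x (c - 1) = Rpower x c / x.
Proof.
  intros hx. unfold Rminus, Rdiv. now rewrite Rpower_plus, Rpower_Ropp, Rpower_1.
Qed.

Lemma Rpower_ge_tangent z b : b <= 0 -> 0 < z -> 1 + b * (z - 1) <= Rpower z b.
Proof.
  intros hb hz.
  assert (hln : ln z <= z - 1).
  { pose proof (exp_ineq1_le (ln z)) as H. rewrite exp_ln in H; lra. }
  pose proof (exp_ineq1_le (b * ln z)). unfold Rpower. nra.
Qed.

Lemma Rpower_sub_le_tangent x y b : b <= 0 -> 0 < x <= y ->
  Rpower x b - Rpower y b <= - b * Rpower x (b - 1) * (y - x).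
Proof.
  intros hb hxy.
  assert (Hy : Rpower y b = Rpower x b * Rpower (y / x) b).
  { rewrite Rpower_mult_distr by (try apply Rdiv_lt_0_compat; lra).
    f_equal. field. lra. }
  pose proof (Rpower_ge_tangent (y / x) b hb ltac:(apply Rdiv_lt_0_compat; lra)).
  pose proof (Rpower_pos x b).
  rewrite Hy, Rpower_pred by lra.
  replace (- b * (Rpower x b / x) * (y - x)) with (Rpower x b * (- b * (y / x - 1)))
    by (field; lra).
  nra.
Qed.

Lemma Gb_increasing_lipschitz beta m x y : beta < 0 -> 0 < m -> m <= x <= y ->
  0 <= Gb beta y - Gb beta x <= - beta * Rpower m (beta - 1) * (y - x).
Proof.
  intros hb hm hxy. unfold Gb. split.
  - pose proof (Rle_Rpower_l_nonpos x y beta). lra.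
  - pose proof (Rpower_sub_le_tangent x y beta ltac:(lra) ltac:(lra)).
    assert (Rpower x (beta - 1) <= Rpower m (beta - 1))
      by (apply Rle_Rpower_l_nonpos; lra).
    assert (0 <= - beta * (y - x)) by nra.
    nra.
Qed.

Lemma is_derive_Rpower_shift tau a t : 0 < t + tau ->
  is_derive (fun s => Rpower (s + tau) a) t (a * Rpower (t + tau) (a - 1)).
Proof.
  intros h.
  assert (Hp : is_derive (fun x => Rpower x a) (t + tau) (a * Rpower (t + tau) (a - 1)))
    by (apply is_derive_Reals, derivable_pt_lim_power; exact h).
  assert (Hs : is_derive (fun s => s + tau) t 1) by (auto_derive; auto; ring).
  pose proof (is_derive_comp _ _ _ _ _ Hp Hs) as H.
  cbn in H. unfold mult in H; cbn in H. now rewrite Rmult_1_l in H.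
Qed.

Lemma continuity_pt_of_is_derive (f : R -> R) x l : is_derive f x l -> continuity_pt f x.
Proof.
  intros H. apply continuity_pt_filterlim.
  exact (ex_derive_continuous f x (ex_intro _ l H)).
Qed.

Lemma nonincreasing_of_derive_nonpos (f df : R -> R) a b : a <= b ->
  (forall x, a <= x <= b -> continuity_pt f x) ->
  (forall x, a < x < b -> is_derive f x (df x) /\ df x <= 0) ->
  f b <= f a.
Proof.
  intros hab hc hd.
  destruct (MVT_gen f a b (fun x => Rmin 0 (df x))) as [c [_ E]];
    rewrite ?Rmin_left, ?Rmax_right in * by lra.
  - intros x hx. destruct (hd x hx) as [Hx Hneg]. now rewrite Rmin_right.
  - exact hc.
  - pose proof (Rmin_l 0 (df c)). nra.
Qed.

Lemma linear_gronwall (e D : R -> R) (K B s0 s : R) :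
  0 < K -> 0 <= B -> s0 <= s ->
  (forall r, s0 <= r <= s -> continuity_pt e r) ->
  (forall r, s0 < r < s -> is_derive e r (D r) /\ D r + K * e r <= B) ->
  e s0 <= 0 -> e s <= B * (s - s0).
Proof.
  intros hK hB hs he hD he0.
  (* integrating factor: e X - B/K (X - 1) is nonincreasing, then 1 - exp (-x) <= x *)
  set (X := fun r => exp (K * (r - s0))).
  assert (HX : forall r : R, is_derive X r (K * X r)).
  { intros r. unfold X. auto_derive; [exact I|]. unfold Rminus. ring. }
  assert (HB : forall r : R, is_derive (fun r => B / K * (X r - 1)) r (B * X r)).
  { intros r. unfold X. auto_derive; [exact I|]. unfold Rminus. field. lra. }
  set (h := fun r => e r * X r - B / K * (X r - 1)).
  assert (Hh : h s <= h s0).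
  { apply (nonincreasing_of_derive_nonpos h (fun r => X r * (D r + K * e r - B))); auto.
    - intros r hr. apply continuity_pt_minus.
      + apply continuity_pt_mult; [apply he, hr | eapply continuity_pt_of_is_derive, HX].
      + eapply continuity_pt_of_is_derive, HB.
    - intros r hr. destruct (hD r hr) as [HDr HDle].
      pose proof (is_derive_mult e X r _ _ HDr (HX r) Rmult_comm) as Hm.
      pose proof (is_derive_minus _ _ _ _ _ Hm (HB r)) as Hh.
      pose proof (exp_pos (K * (r - s0))) as HXr. fold (X r) in HXr.
      split; [|nra].
      replace (X r * (D r + K * e r - B)) with (D r * X r + e r * (K * X r) - B * X r)
        by ring.
      exact Hh. }
  assert (HX0 : X s0 = 1) by (unfold X; rewrite Rminus_diag, Rmult_0_r; apply exp_0).
  unfold h in Hh. rewrite HX0 in Hh.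
  pose proof (exp_ineq1_le (- (K * (s - s0)))) as Hm.
  assert (HXm : X s * exp (- (K * (s - s0))) = 1)
    by (unfold X; rewrite <- exp_plus, Rplus_opp_r; apply exp_0).
  pose proof (exp_pos (K * (s - s0))) as HXs. fold (X s) in HXs.
  assert (Hd : B / K * (X s - 1) <= B * (s - s0) * X s).
  { apply Rmult_le_reg_l with K; [lra|].
    replace (K * (B / K * (X s - 1))) with (B * (X s - 1)) by (field; lra).
    assert (X s - 1 <= K * (s - s0) * X s) by nra. nra. }
  nra.
Qed.

Lemma le_0_of_le_geom_half x A : (forall i, x <= A * (/ 2) ^ i) -> x <= 0.
Proof.
  intros H.
  assert (Hl : is_lim_seq (fun i => A * (/ 2) ^ i) 0).
  { replace (Finite 0) with (Rbar_mult A 0) by (cbn; f_equal; ring).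
    apply is_lim_seq_scal_l, is_lim_seq_geom.
    rewrite Rabs_pos_eq; lra. }
  exact (is_lim_seq_le (fun _ => x) _ x 0 H (is_lim_seq_const x) Hl).
Qed.

Section Comparison.

Variables (G : R -> R) (m Lam T A : R) (u v : R -> Z -> R).

Hypothesis Lam_pos : 0 < Lam.
Hypothesis A_nonneg : 0 <= A.
Hypothesis G_lipschitz : forall x y, m <= x <= y -> 0 <= G y - G x <= Lam * (y - x).
Hypothesis solutions_ge : forall t k, 0 <= t <= T -> m <= u t k /\ m <= v t k.
Hypothesis excess_le : forall t k, 0 <= t <= T -> v t k - u t k <= A.
Hypothesis initial_le : forall k, v 0 k <= u 0 k.
Hypothesis u_continuous : forall t k, 0 <= t <= T -> continuity_pt (fun s => u s k) t.
Hypothesis v_continuous : forall t k, 0 <= t <= T -> continuity_pt (fun s => v s k) t.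
Hypothesis u_solution : forall t k, 0 < t < T ->
  is_derive (fun s => u s k) t (dlap (fun j => G (u t j)) k).
Hypothesis v_subsolution : forall t k, 0 < t < T ->
  exists D, is_derive (fun s => v s k) t D /\ D <= dlap (fun j => G (v t j)) k.

Lemma G_sub_le x y B : m <= x -> m <= y -> y - x <= B -> 0 <= B -> G y - G x <= Lam * B.
Proof.
  intros hx hy hB hB0. destruct (Rle_dec x y).
  - pose proof (G_lipschitz x y ltac:(lra)). nra.
  - pose proof (G_lipschitz y x ltac:(lra)). nra.
Qed.

Lemma G_lipschitz_defect_le x y B : m <= x -> m <= y -> y - x <= B -> 0 <= B ->
  Lam * (y - x) - (G y - G x) <= Lam * B.
Proof.
  intros hx hy hB hB0. destruct (Rle_dec x y).
  - pose proof (G_lipschitz x y ltac:(lra)). nra.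
  - pose proof (G_lipschitz y x ltac:(lra)). nra.
Qed.

Lemma dlap_sub_le (x y : Z -> R) k B :
  (forall j, m <= x j /\ m <= y j) -> (forall j, y j - x j <= B) -> 0 <= B ->
  dlap (fun j => G (y j)) k - dlap (fun j => G (x j)) k + 2 * Lam * (y k - x k)
    <= 4 * Lam * B.
Proof.
  intros hm hB hB0. unfold dlap.
  pose proof (G_sub_le (x (k - 1)%Z) (y (k - 1)%Z) B).
  pose proof (G_sub_le (x (k + 1)%Z) (y (k + 1)%Z) B).
  pose proof (G_lipschitz_defect_le (x k) (y k) B).
  pose proof (hm (k - 1)%Z). pose proof (hm (k + 1)%Z). pose proof (hm k).
  pose proof (hB (k - 1)%Z). pose proof (hB (k + 1)%Z). pose proof (hB k).
  intuition lra.
Qed.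

Lemma excess_derive_le r k B : 0 < r < T -> 0 <= B -> (forall j, v r j - u r j <= B) ->
  exists D, is_derive (fun s => v s k - u s k) r D /\
    D + 2 * Lam * (v r k - u r k) <= 4 * Lam * B.
Proof.
  intros hr hB0 hB. destruct (v_subsolution r k hr) as [D [HD HDle]].
  exists (D - dlap (fun j => G (u r j)) k). split.
  - exact (is_derive_minus _ _ _ _ _ HD (u_solution r k hr)).
  - pose proof (dlap_sub_le (u r) (v r) k B (fun j => solutions_ge r j ltac:(lra)) hB hB0).
    lra.
Qed.

(* On a window of length 1/(8 Lam) each application of the Gronwall bound halves the
   excess of v over u, which starts below A. *)
Lemma excess_halving s0 s1 : 0 <= s0 -> s0 <= s1 <= T -> s1 - s0 <= / (8 * Lam) ->
  (forall j, v s0 j <= u s0 j) ->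
  forall i j s, s0 <= s <= s1 -> v s j - u s j <= A * (/ 2) ^ i.
Proof.
  intros hs0 hs1 hlen h0 i. induction i as [|i IH]; intros j s hs.
  - rewrite pow_O, Rmult_1_r. apply excess_le. lra.
  - set (B := A * (/ 2) ^ i) in *.
    assert (hB : 0 <= B) by (apply Rmult_le_pos; [lra | apply pow_le; lra]).
    set (e := fun r => v r j - u r j).
    assert (He : e s <= 4 * Lam * B * (s - s0)).
    { apply (linear_gronwall e (Derive e) (2 * Lam)); [lra | nra | lra | | |].
      - intros r hr. apply continuity_pt_minus; [apply v_continuous | apply u_continuous]; lra.
      - intros r hr.
        destruct (excess_derive_le r j B ltac:(lra) hB (fun jj => IH jj r ltac:(lra)))
          as [D [HD HDle]].
        rewrite (is_derive_unique e r D HD). auto.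
      - unfold e. pose proof (h0 j). lra. }
    assert (4 * Lam * B * (s - s0) <= 4 * Lam * B * / (8 * Lam))
      by (apply Rmult_le_compat_l; nra).
    replace (A * (/ 2) ^ S i) with (4 * Lam * B * / (8 * Lam)) by (unfold B; simpl; field; lra).
    unfold e in He. lra.
Qed.

Lemma comparison t k : 0 <= t <= T -> v t k <= u t k.
Proof.
  assert (Hn : forall n j s, 0 <= s <= T -> s <= INR n / (8 * Lam) -> v s j <= u s j).
  { induction n as [|n IH]; intros j s hs hsn.
    - replace s with 0 by (simpl in hsn; rewrite Rdiv_0_l in hsn; lra). apply initial_le.
    - set (s0 := INR n / (8 * Lam)).
      destruct (Rle_dec s s0) as [hle|hgt]; [now apply IH|].
      assert (hs0 : 0 <= s0) by (apply Rdiv_le_0_compat; [apply pos_INR | lra]).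
      rewrite S_INR in hsn.
      apply Rminus_le, (le_0_of_le_geom_half _ A). intros i.
      apply (excess_halving s0 s); try lra.
      + replace (/ (8 * Lam)) with ((INR n + 1) / (8 * Lam) - s0) by (unfold s0; field; lra).
        lra.
      + intros jj. apply IH; [lra | apply Rle_refl]. }
  intros ht. destruct (INR_unbounded (8 * Lam * T)) as [n hn].
  apply (Hn n); auto. apply Rle_trans with T; [lra|].
  apply Rmult_le_reg_l with (8 * Lam); [lra|]. unfold Rdiv.
  rewrite (Rmult_comm (INR n)), <- Rmult_assoc, Rinv_r, Rmult_1_l by lra. lra.
Qed.

End Comparison.

Section GapAhead.

Variables (big : Z -> Prop) (big_dec : forall k, {big k} + {~ big k}) (L : nat).
Hypothesis big_ahead : forall k, exists i, (i < L)%nat /\ big (k + Z.of_nat (S i)).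

Lemma big_ahead_ex k : exists i, big (k + Z.of_nat (S i)).
Proof. destruct (big_ahead k) as [i [_ Hi]]. now exists i. Qed.

Definition gap_ahead (k : Z) : nat :=
  S (proj1_sig (epsilon_smallest _ (fun i => big_dec (k + Z.of_nat (S i))) (big_ahead_ex k))).

Lemma gap_ahead_spec k : big (k + Z.of_nat (gap_ahead k)) /\
  forall i, big (k + Z.of_nat (S i)) -> (gap_ahead k <= S i)%nat.
Proof.
  unfold gap_ahead.
  destruct (epsilon_smallest _ _ (big_ahead_ex k)) as [n [Hn Hmin]]; cbn.
  split; [exact Hn|]. intros i Hi. specialize (Hmin i Hi). lia.
Qed.

Lemma gap_ahead_range k : (1 <= gap_ahead k <= L)%nat.
Proof.
  destruct (gap_ahead_spec k) as [_ Hmin]. destruct (big_ahead k) as [i [hi Hi]].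
  specialize (Hmin i Hi). unfold gap_ahead in *. lia.
Qed.

Lemma gap_ahead_next_big k : big (k + 1) -> gap_ahead k = 1%nat.
Proof.
  intros Hk. destruct (gap_ahead_spec k) as [_ Hmin].
  pose proof (gap_ahead_range k). specialize (Hmin 0%nat Hk). lia.
Qed.

Lemma gap_ahead_pred k : ~ big k -> gap_ahead (k - 1) = S (gap_ahead k).
Proof.
  intros Hk.
  destruct (gap_ahead_spec k) as [Hg Hmin], (gap_ahead_spec (k - 1)) as [Hg' Hmin'].
  pose proof (gap_ahead_range k). pose proof (gap_ahead_range (k - 1)).
  apply Nat.le_antisymm.
  - apply Hmin'. replace (k - 1 + Z.of_nat (S (gap_ahead k)))%Z
      with (k + Z.of_nat (gap_ahead k))%Z by lia. exact Hg.
  - destruct (gap_ahead (k - 1)) as [|[|g]] eqn:E; try lia.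
    + exfalso. apply Hk. replace k with (k - 1 + Z.of_nat 1)%Z by lia. exact Hg'.
    + apply le_n_S, Hmin. replace (k + Z.of_nat (S g))%Z
        with (k - 1 + Z.of_nat (S (S g)))%Z by lia. exact Hg'.
Qed.

End GapAhead.

Section GapWeight.

Variables (big : Z -> Prop) (big_dec : forall k, {big k} + {~ big k}) (L : nat).
Hypothesis big_ahead : forall k, exists i, (i < L)%nat /\ big (k + Z.of_nat (S i)).

Lemma big_behind k : exists i, (i < L)%nat /\ big (- (k + Z.of_nat (S i))).
Proof.
  destruct (big_ahead (- k - Z.of_nat L - 1)) as [i [hi Hi]].
  exists (L - S i)%nat. split; [lia|].
  replace (- (k + Z.of_nat (S (L - S i))))%Z with (- k - Z.of_nat L - 1 + Z.of_nat (S i))%Z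
    by lia.
  exact Hi.
Qed.

Definition gap_behind (k : Z) : nat :=
  gap_ahead (fun j => big (- j)) (fun j => big_dec (- j)) L big_behind (- k).

Lemma gap_behind_range k : (1 <= gap_behind k <= L)%nat.
Proof. apply gap_ahead_range. Qed.

Lemma gap_behind_prev_big k : big (k - 1) -> gap_behind k = 1%nat.
Proof.
  intros Hk. apply gap_ahead_next_big. now replace (- (- k + 1))%Z with (k - 1)%Z by lia.
Qed.

Lemma gap_behind_succ k : ~ big k -> gap_behind (k + 1) = S (gap_behind k).
Proof.
  intros Hk. unfold gap_behind. rewrite <- gap_ahead_pred by now rewrite Z.opp_involutive.
  now replace (- (k + 1))%Z with (- k - 1)%Z by lia.
Qed.

Definition gap_weight (k : Z) : R :=
  if big_dec k then 0 else INR (gap_behind k) * INR (gap_ahead big big_dec L big_ahead k).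

Lemma gap_weight_big k : big k -> gap_weight k = 0.
Proof. intros Hk. unfold gap_weight. now destruct (big_dec k). Qed.

Lemma gap_weight_small_range k : ~ big k -> 1 <= gap_weight k <= INR L ^ 2.
Proof.
  intros Hk. unfold gap_weight. destruct (big_dec k) as [|_]; [contradiction|].
  pose proof (gap_behind_range k) as [hp hp'].
  pose proof (gap_ahead_range big big_dec L big_ahead k) as [hq hq'].
  apply le_INR in hp, hp', hq, hq'. change (INR 1) with 1 in hp, hq.
  replace (INR L ^ 2) with (INR L * INR L) by ring. split; nra.
Qed.

(* Between consecutive big sites a < k < b the weight is (k - a) (b - k), a discrete
   parabola with second difference -2. *)
Lemma gap_weight_concave k : ~ big k ->
  gap_weight (k - 1) + gap_weight (k + 1) + 2 = 2 * gap_weight k.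
Proof.
  intros Hk.
  set (p := gap_behind k). set (q := gap_ahead big big_dec L big_ahead k).
  assert (Hl : gap_weight (k - 1) = (INR p - 1) * (INR q + 1)).
  { unfold gap_weight. destruct (big_dec (k - 1)) as [Hb|Hb].
    - unfold p. rewrite gap_behind_prev_big by exact Hb. simpl. ring.
    - assert (Ep : p = S (gap_behind (k - 1)))
        by (unfold p; rewrite <- gap_behind_succ by exact Hb; f_equal; lia).
      unfold q. rewrite Ep, gap_ahead_pred by exact Hk. rewrite !S_INR. ring. }
  assert (Hr : gap_weight (k + 1) = (INR p + 1) * (INR q - 1)).
  { unfold gap_weight. destruct (big_dec (k + 1)) as [Hb|Hb].
    - unfold q. rewrite gap_ahead_next_big by exact Hb. simpl. ring.
    - assert (Eq : q = S (gap_ahead big big_dec L big_ahead (k + 1)))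
        by (unfold q; rewrite <- gap_ahead_pred by exact Hb; f_equal; lia).
      unfold p. rewrite Eq, gap_behind_succ by exact Hk. rewrite !S_INR. ring. }
  assert (Hk' : gap_weight k = INR p * INR q).
  { unfold gap_weight. now destruct (big_dec k). }
  rewrite Hl, Hr, Hk'. ring.
Qed.

End GapWeight.

Lemma in_P_big_ahead (L : nat) (d : R) (u0 : Z -> R) : in_P L d u0 ->
  forall k : Z, exists i, (i < L)%nat /\ d <= u0 (k + Z.of_nat (S i))%Z.
Proof.
  intros [_ HP] k. apply NNPP. intros Hnone.
  assert (Hfar : forall l, (k < l)%Z -> d <= u0 l -> (k + Z.of_nat L + 1 <= l)%Z).
  { intros l hl hd. apply Z.nlt_ge. intros hlt. apply Hnone.
    exists (Z.to_nat (l - k - 1)). split; [lia|].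
    now replace (k + Z.of_nat (S (Z.to_nat (l - k - 1))))%Z with l by lia. }
  specialize (HP k). unfold sigma_plus in HP.
  set (Sites := fun x => exists l : Z, (k < l)%Z /\ d <= u0 l /\ x = IZR l) in HP.
  destruct (Glb_Rbar_correct Sites) as [_ Hglb].
  assert (Hb : Rbar_le (IZR (k + Z.of_nat L + 1)) (Glb_Rbar Sites)).
  { apply Hglb. intros x [l [hl [hd ->]]]. apply IZR_le, Hfar; assumption. }
  destruct (Glb_Rbar Sites); cbn in *; try contradiction.
  rewrite !plus_IZR, <- INR_IZR_INZ in Hb. lra.
Qed.

Lemma Rabs_le_linf_norm (x : Z -> R) M k : (forall j, Rabs (x j) <= M) ->
  Rabs (x k) <= linf_norm x.
Proof.
  intros HM. unfold linf_norm.
  set (Norms := fun y => exists j, y = Rabs (x j)).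
  destruct (Lub_Rbar_correct Norms) as [Hub Hlub].
  assert (H1 : Rbar_le (Rabs (x k)) (Lub_Rbar Norms)) by (apply Hub; now exists k).
  assert (H2 : Rbar_le (Lub_Rbar Norms) M) by (apply Hlub; intros y [j ->]; apply HM).
  destruct (Lub_Rbar Norms); cbn in *; tauto.
Qed.

Section Solution.

Variables (beta : R) (u0 : Z -> R) (u : R -> Z -> R).
Hypothesis u_solution : is_solution beta u0 u.

(* Clamping time at 0 turns the one-sided behaviour at t = 0 into two-sided continuity. *)
Lemma solution_clamped_derive t k : 0 < t ->
  is_derive (fun s => u (Rmax 0 s) k) t (dlap (fun j => Gb beta (u t j)) k).
Proof.
  intros ht. destruct u_solution as (_ & _ & _ & _ & _ & _ & Hder).
  apply (is_derive_ext_loc (fun s => u s k)).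
  - exists (mkposreal t ht). intros s Hs. cbn in Hs.
    unfold AbsRing_ball, abs, minus, plus, opp in Hs; cbn in Hs.
    apply Rabs_lt_between' in Hs. now rewrite Rmax_right by lra.
  - now apply Hder.
Qed.

Lemma solution_clamped_continuous_0 k : continuity_pt (fun s => u (Rmax 0 s) k) 0.
Proof.
  destruct u_solution as (Hbdd & Hcont & _).
  intros eps heps. destruct (Hcont 0 (Rle_refl 0) (eps / 2)) as [eta [heta Heta]]; [lra|].
  exists eta. split; [exact heta|]. intros s [_ hs]. cbn in *. unfold R_dist in *.
  rewrite (Rmax_left 0 0) by lra.
  assert (hs0 : 0 <= Rmax 0 s) by apply Rmax_l.
  assert (hseta : Rabs (Rmax 0 s - 0) < eta).
  { unfold Rmax. destruct (Rle_dec 0 s); [exact hs|]. rewrite Rminus_0_r, Rabs_R0. lra. }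
  destruct (Hbdd _ hs0) as [_ [M1 HM1]], (Hbdd 0 (Rle_refl 0)) as [_ [M2 HM2]].
  assert (Hk : Rabs (u (Rmax 0 s) k - u 0 k) <= linf_norm (fun j => u (Rmax 0 s) j - u 0 j)).
  { apply (Rabs_le_linf_norm (fun j => u (Rmax 0 s) j - u 0 j) (M1 + M2) k). intros j.
    eapply Rle_trans; [apply Rabs_triang|]. rewrite Rabs_Ropp.
    pose proof (HM1 j). pose proof (HM2 j). lra. }
  pose proof (Heta _ hs0 hseta). lra.
Qed.

Lemma solution_clamped_continuous t k : 0 <= t ->
  continuity_pt (fun s => u (Rmax 0 s) k) t.
Proof.
  intros ht. destruct (Req_dec t 0) as [->|hne].
  - apply solution_clamped_continuous_0.
  - eapply continuity_pt_of_is_derive, solution_clamped_derive. lra.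
Qed.

End Solution.

Section Barrier.

Variables (beta : R) (L : nat) (d : R).
Hypothesis beta_neg : beta < 0.
Hypothesis d_pos : 0 < d.

Definition rate : R := 1 / (1 - beta).
Definition weight_bound : R := INR L ^ 2 + 1.
Definition big_speed : R := 2 * weight_bound / rate.
Definition horizon : R :=
  Rmin (Rpower (d / (4 * big_speed)) (/ rate))
       (Rpower (4 * Rpower (d / 4) beta) (/ (rate - 1))) / 2.
Definition lower_const : R :=
  Rmin (Rpower weight_bound (/ beta)) (d / 4 / Rpower horizon rate).

Lemma rate_range : 0 < rate < 1.
Proof.
  unfold rate. split; [apply Rdiv_lt_0_compat; lra|].
  apply Rmult_lt_reg_r with (1 - beta); [lra|]. field_simplify; lra.
Qed.

Lemma rate_mul_beta : rate * beta = rate - 1.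
Proof. unfold rate. field. lra. Qed.

Lemma weight_bound_ge_1 : 1 <= weight_bound.
Proof. unfold weight_bound. pose proof (pow2_ge_0 (INR L)). lra. Qed.

Lemma weight_bound_pow_range : 0 < Rpower weight_bound (/ beta) <= 1.
Proof.
  split; [apply Rpower_pos|]. rewrite <- (Rpower_1_l (/ beta)).
  apply Rle_Rpower_l_nonpos; [apply Rlt_le, Rinv_lt_0_compat, beta_neg|].
  pose proof weight_bound_ge_1. lra.
Qed.

Lemma big_speed_ge_2 : 2 <= big_speed.
Proof.
  pose proof rate_range. pose proof weight_bound_ge_1. unfold big_speed.
  apply Rmult_le_reg_r with rate; [lra|]. field_simplify; nra.
Qed.

Lemma horizon_pos : 0 < horizon.
Proof.
  unfold horizon. apply Rdiv_lt_0_compat; [apply Rmin_glb_lt; apply Rpower_pos | lra].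
Qed.

Lemma horizon_big_speed s : 0 < s <= 2 * horizon -> big_speed * Rpower s rate <= d / 4.
Proof.
  intros hs. pose proof rate_range. pose proof big_speed_ge_2.
  assert (Hs : s <= Rpower (d / (4 * big_speed)) (/ rate)).
  { unfold horizon in hs. pose proof (Rmin_l (Rpower (d / (4 * big_speed)) (/ rate))
      (Rpower (4 * Rpower (d / 4) beta) (/ (rate - 1)))). lra. }
  assert (Hp : Rpower s rate <= d / (4 * big_speed)).
  { rewrite <- (Rpower_Rinv_r (d / (4 * big_speed)) rate) by
      (try apply Rdiv_lt_0_compat; lra).
    apply Rle_Rpower_l; lra. }
  apply Rmult_le_compat_l with (r := big_speed) in Hp; [|lra].
  replace (big_speed * (d / (4 * big_speed))) with (d / 4) in Hp by (field; lra). exact Hp.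
Qed.

Lemma horizon_pow s : 0 < s <= 2 * horizon -> 4 * Rpower (d / 4) beta <= Rpower s (rate - 1).
Proof.
  intros hs. pose proof rate_range.
  assert (Hs : s <= Rpower (4 * Rpower (d / 4) beta) (/ (rate - 1))).
  { unfold horizon in hs. pose proof (Rmin_r (Rpower (d / (4 * big_speed)) (/ rate))
      (Rpower (4 * Rpower (d / 4) beta) (/ (rate - 1)))). lra. }
  rewrite <- (Rpower_Rinv_r (4 * Rpower (d / 4) beta) (rate - 1))
    by (pose proof (Rpower_pos (d / 4) beta); lra).
  apply Rle_Rpower_l_nonpos; lra.
Qed.

Lemma lower_const_pos : 0 < lower_const.
Proof.
  unfold lower_const. pose proof horizon_pos. apply Rmin_glb_lt; [apply Rpower_pos|].
  apply Rdiv_lt_0_compat; [lra | apply Rpower_pos].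
Qed.

Variables (u0 w : Z -> R) (tau : R).
Hypothesis w_big : forall k, d <= u0 k -> w k = 0.
Hypothesis w_small : forall k, ~ d <= u0 k -> 1 <= w k <= weight_bound.
Hypothesis w_concave : forall k, ~ d <= u0 k -> w (k - 1)%Z + w (k + 1)%Z + 2 <= 2 * w k.
Hypothesis tau_pos : 0 < tau.
Hypothesis tau_le : tau <= horizon.

Definition barrier (t : R) (k : Z) : R :=
  if Rle_dec d (u0 k) then d / 2 - big_speed * Rpower (t + tau) rate
  else Rpower (w k) (/ beta) * Rpower (t + tau) rate.

Lemma barrier_derive t k : 0 < t + tau ->
  is_derive (fun s => barrier s k) t
    ((if Rle_dec d (u0 k) then - big_speed else Rpower (w k) (/ beta))
       * (rate * Rpower (t + tau) (rate - 1))).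
Proof.
  intros ht. pose proof (is_derive_Rpower_shift tau rate t ht) as H.
  unfold barrier. destruct (Rle_dec d (u0 k)).
  - replace (- big_speed * (rate * Rpower (t + tau) (rate - 1)))
      with (0 - big_speed * (rate * Rpower (t + tau) (rate - 1))) by ring.
    exact (is_derive_minus _ _ _ _ _ (is_derive_const (d / 2) t) (is_derive_scal _ _ _ _ H)).
  - now apply is_derive_scal.
Qed.

Lemma barrier_big t k : 0 <= t <= horizon -> d <= u0 k -> d / 4 <= barrier t k <= d / 2.
Proof.
  intros ht hk. unfold barrier. destruct (Rle_dec d (u0 k)); [|contradiction].
  pose proof (horizon_big_speed (t + tau) ltac:(lra)). pose proof big_speed_ge_2.
  pose proof (Rpower_pos (t + tau) rate). nra.
Qed.

Lemma barrier_small_range t k : 0 <= t -> ~ d <= u0 k ->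
  Rpower weight_bound (/ beta) * Rpower (t + tau) rate <= barrier t k
  <= Rpower (t + tau) rate.
Proof.
  intros ht hk. unfold barrier. destruct (Rle_dec d (u0 k)); [contradiction|].
  pose proof (w_small k hk). pose proof (Rpower_pos (t + tau) rate).
  assert (hb : / beta <= 0) by (apply Rlt_le, Rinv_lt_0_compat, beta_neg).
  split.
  - apply Rmult_le_compat_r; [lra|]. apply Rle_Rpower_l_nonpos; lra.
  - rewrite <- (Rmult_1_l (Rpower (t + tau) rate)) at 2.
    apply Rmult_le_compat_r; [lra|].
    rewrite <- (Rpower_1_l (/ beta)). apply Rle_Rpower_l_nonpos; lra.
Qed.

Lemma barrier_small_pow t k : 0 < t + tau -> ~ d <= u0 k ->
  Rpower (barrier t k) beta = w k * Rpower (t + tau) (rate - 1).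
Proof.
  intros ht hk. unfold barrier. destruct (Rle_dec d (u0 k)); [contradiction|].
  pose proof (w_small k hk).
  rewrite <- Rpower_mult_distr, !Rpower_mult, Rinv_l, Rpower_1, rate_mul_beta by
    (try apply Rpower_pos; lra).
  reflexivity.
Qed.

Lemma barrier_le t k : 0 <= t <= horizon -> barrier t k <= d / 2.
Proof.
  intros ht. destruct (Rle_dec d (u0 k)) as [hk|hk].
  - now apply barrier_big.
  - pose proof (barrier_small_range t k ltac:(lra) hk).
    pose proof (horizon_big_speed (t + tau) ltac:(lra)). pose proof big_speed_ge_2.
    pose proof (Rpower_pos (t + tau) rate). nra.
Qed.

Lemma barrier_floor t k : 0 <= t <= horizon ->
  Rmin (d / 4) (Rpower weight_bound (/ beta) * Rpower tau rate) <= barrier t k.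
Proof.
  intros ht. destruct (Rle_dec d (u0 k)) as [hk|hk].
  - pose proof (barrier_big t k ht hk). pose proof (Rmin_l (d / 4)
      (Rpower weight_bound (/ beta) * Rpower tau rate)). lra.
  - pose proof (barrier_small_range t k ltac:(lra) hk). pose proof weight_bound_pow_range.
    pose proof rate_range.
    assert (Rpower tau rate <= Rpower (t + tau) rate) by (apply Rle_Rpower_l; lra).
    pose proof (Rmin_r (d / 4) (Rpower weight_bound (/ beta) * Rpower tau rate)). nra.
Qed.

Lemma barrier_pow_le t j : 0 <= t <= horizon ->
  Rpower (barrier t j) beta <= (w j + / 4) * Rpower (t + tau) (rate - 1).
Proof.
  intros ht. pose proof (Rpower_pos (t + tau) (rate - 1)).
  destruct (Rle_dec d (u0 j)) as [hj|hj].
  - rewrite (w_big j hj). pose proof (barrier_big t j ht hj).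
    pose proof (horizon_pow (t + tau) ltac:(lra)).
    assert (Rpower (barrier t j) beta <= Rpower (d / 4) beta)
      by (apply Rle_Rpower_l_nonpos; lra).
    lra.
  - rewrite (barrier_small_pow t j ltac:(lra) hj). lra.
Qed.

Lemma barrier_pow_le_big t k j : 0 <= t <= horizon -> d <= u0 k ->
  Rpower (barrier t j) beta <= Rpower (barrier t k) beta
    + weight_bound * Rpower (t + tau) (rate - 1).
Proof.
  intros ht hk. pose proof (Rpower_pos (t + tau) (rate - 1)).
  pose proof weight_bound_ge_1. pose proof (Rpower_pos (barrier t k) beta).
  destruct (Rle_dec d (u0 j)) as [hj|hj].
  - assert (barrier t j = barrier t k) by (unfold barrier;
      destruct (Rle_dec d (u0 j)), (Rle_dec d (u0 k)); tauto).
    rewrite H2. nra.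
  - rewrite (barrier_small_pow t j ltac:(lra) hj). pose proof (w_small j hj). nra.
Qed.

Lemma barrier_subsolution t k : 0 <= t <= horizon ->
  exists D, is_derive (fun s => barrier s k) t D /\
    D <= dlap (fun j => Gb beta (barrier t j)) k.
Proof.
  intros ht. eexists. split; [apply barrier_derive; lra|].
  pose proof rate_range. set (E := Rpower (t + tau) (rate - 1)).
  assert (hE : 0 < E) by apply Rpower_pos.
  unfold dlap, Gb. destruct (Rle_dec d (u0 k)) as [hk|hk].
  - pose proof (barrier_pow_le_big t k (k - 1) ht hk).
    pose proof (barrier_pow_le_big t k (k + 1) ht hk).
    replace (- big_speed * (rate * E)) with (- (2 * weight_bound * E))
      by (unfold big_speed; field; lra).
    fold E in H0, H1. lra.
  - pose proof (barrier_pow_le t (k - 1) ht). pose proof (barrier_pow_le t (k + 1) ht).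
    rewrite (barrier_small_pow t k ltac:(lra) hk). fold E in H0, H1 |- *.
    assert (Hc : E * (w (k - 1) + w (k + 1) + 2) <= E * (2 * w k))
      by (apply Rmult_le_compat_l; [lra | exact (w_concave k hk)]).
    assert (Hw : Rpower (w k) (/ beta) <= 1).
    { pose proof (w_small k hk). rewrite <- (Rpower_1_l (/ beta)).
      apply Rle_Rpower_l_nonpos; [apply Rlt_le, Rinv_lt_0_compat, beta_neg | lra]. }
    assert (Rpower (w k) (/ beta) * (rate * E) <= E).
    { pose proof (Rpower_pos (w k) (/ beta)).
      rewrite <- Rmult_assoc. rewrite <- (Rmult_1_l E) at 2.
      apply Rmult_le_compat_r; nra. }
    lra.
Qed.

Lemma barrier_initial delta k : Rpower tau rate <= delta ->
  barrier 0 k <= Rmax (u0 k) delta.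
Proof.
  intros hdelta. destruct (Rle_dec d (u0 k)) as [hk|hk].
  - pose proof (barrier_big 0 k ltac:(pose proof horizon_pos; lra) hk).
    pose proof (Rmax_l (u0 k) delta). lra.
  - pose proof (barrier_small_range 0 k (Rle_refl 0) hk). rewrite Rplus_0_l in H.
    pose proof (Rmax_r (u0 k) delta). lra.
Qed.

Lemma barrier_lower_bound t k : 0 < t <= horizon ->
  lower_const * Rpower t rate <= barrier t k.
Proof.
  intros ht. pose proof rate_range. pose proof lower_const_pos.
  assert (Hth : Rpower t rate <= Rpower horizon rate) by (apply Rle_Rpower_l; lra).
  destruct (Rle_dec d (u0 k)) as [hk|hk].
  - pose proof (barrier_big t k ltac:(lra) hk).
    assert (lower_const <= d / 4 / Rpower horizon rate) by apply Rmin_r.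
    pose proof (Rpower_pos horizon rate).
    apply Rle_trans with (d / 4 / Rpower horizon rate * Rpower horizon rate).
    + apply Rmult_le_compat; try lra. apply Rlt_le, Rpower_pos.
    + replace (d / 4 / Rpower horizon rate * Rpower horizon rate) with (d / 4)
        by (field; lra). lra.
  - pose proof (barrier_small_range t k ltac:(lra) hk).
    assert (lower_const <= Rpower weight_bound (/ beta)) by apply Rmin_l.
    assert (Rpower t rate <= Rpower (t + tau) rate) by (apply Rle_Rpower_l; lra).
    pose proof (Rpower_pos t rate). pose proof weight_bound_pow_range. nra.
Qed.

Lemma barrier_le_solution delta u : Rpower tau rate <= delta ->
  is_solution beta (fun k => Rmax (u0 k) delta) u ->
  (forall t k, 0 <= t -> delta <= u t k) ->
  forall t k, 0 <= t <= horizon -> barrier t k <= u t k.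
Proof.
  intros hdelta Hsol Hlow t k ht.
  set (m := Rmin (d / 4) (Rpower weight_bound (/ beta) * Rpower tau rate)).
  assert (hm : 0 < m).
  { apply Rmin_glb_lt; [lra | apply Rmult_lt_0_compat; apply Rpower_pos]. }
  assert (hmdelta : m <= delta).
  { unfold m. pose proof weight_bound_pow_range. pose proof (Rpower_pos tau rate).
    pose proof (Rmin_r (d / 4) (Rpower weight_bound (/ beta) * Rpower tau rate)). nra. }
  replace (u t k) with (u (Rmax 0 t) k) by (now rewrite Rmax_right by lra).
  apply (comparison (Gb beta) m (- beta * Rpower m (beta - 1)) horizon (d / 2)
           (fun s j => u (Rmax 0 s) j) barrier); auto; try lra.
  - pose proof (Rpower_pos m (beta - 1)). nra.
  - intros x y hxy. apply Gb_increasing_lipschitz; lra.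
  - intros s j hs. split; [|apply barrier_floor, hs].
    pose proof (Hlow (Rmax 0 s) j (Rmax_l 0 s)). lra.
  - intros s j hs. pose proof (barrier_le s j hs).
    pose proof (Hlow (Rmax 0 s) j (Rmax_l 0 s)). lra.
  - intros j. destruct Hsol as (_ & _ & Hinit & _).
    rewrite Rmax_left, Hinit by lra. now apply barrier_initial.
  - intros s j hs. now apply (solution_clamped_continuous beta _ _ Hsol).
  - intros s j hs. eapply continuity_pt_of_is_derive, barrier_derive. lra.
  - intros s j hs. rewrite (Rmax_right 0 s) by lra.
    now apply (solution_clamped_derive beta _ _ Hsol).
  - intros s j hs. apply barrier_subsolution. lra.
Qed.

End Barrier.

Theorem lemmaA10 :
  forall (beta : R) (L : nat) (d : R), beta < 0 -> 0 < d ->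
  exists c tstar : R, 0 < c /\ 0 < tstar /\
    forall (u0 : Z -> R) (delta : R) (u : R -> Z -> R),
      in_P L d u0 -> 0 < delta ->
      is_solution beta (fun k => Rmax (u0 k) delta) u ->
      (forall t k, 0 <= t ->
         delta <= u t k <= linf_norm (fun j => Rmax (u0 j) delta)) ->
      forall t k, 0 <= t <= tstar ->
        c * rpow0 t (1 / (1 - beta)) <= u t k.
Proof.
  intros beta L d hbeta hd.
  exists (lower_const beta L d), (horizon beta L d).
  split; [now apply lower_const_pos|]. split; [now apply horizon_pos|].
  intros u0 delta u HP hdelta Hsol Hbnd t k ht.
  unfold rpow0. destruct (Rle_dec t 0) as [ht0|ht0].
  { pose proof (Hbnd t k ltac:(lra)). lra. }
  pose proof (in_P_big_ahead L d u0 HP) as Hahead.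
  set (big_dec := fun j => Rle_dec d (u0 j)).
  set (w := gap_weight _ big_dec L Hahead).
  set (tau := Rmin (horizon beta L d) (Rpower delta (/ rate beta))).
  pose proof (rate_range beta hbeta) as hrate. pose proof (horizon_pos beta L d) as hT.
  assert (htau : 0 < tau) by (apply Rmin_glb_lt; [lra | apply Rpower_pos]).
  assert (htau_delta : Rpower tau (rate beta) <= delta).
  { rewrite <- (Rpower_Rinv_r delta (rate beta)) by lra.
    apply Rle_Rpower_l; [lra | split; [lra | apply Rmin_r]]. }
  assert (Hw_big : forall j, d <= u0 j -> w j = 0) by apply gap_weight_big.
  assert (Hw_small : forall j, ~ d <= u0 j -> 1 <= w j <= weight_bound L).
  { intros j hj. pose proof (gap_weight_small_range _ big_dec _ Hahead j hj).
    unfold w, weight_bound. lra. }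
  assert (Hw_concave : forall j, ~ d <= u0 j -> w (j - 1)%Z + w (j + 1)%Z + 2 <= 2 * w j).
  { intros j hj. unfold w. rewrite (gap_weight_concave _ big_dec _ Hahead j hj). lra. }
  apply Rle_trans with (barrier beta L d u0 w tau t k).
  - apply barrier_lower_bound; auto; [apply Rmin_l | lra].
  - apply barrier_le_solution with (delta := delta); auto; try apply Rmin_l.
    intros s j hs. apply Hbnd, hs.
Qed.
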